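(* Let $I=(G,\mathcal{T},p)$ be a \textsc{DAG Multicut} instance satisfying the standing assumptions below, and let $G^*$ be its degree-reduced graph, with the sets $B_i$ as in its definition. Then: (1) $|N^+_{G^*}(T^s)|\le rp$; (2) for each $1\le i\le r$, $B_i$ is the $s_i-t_i$ mincut closest to $s_i$ in $G^*$; (3) $\Phi(I')=\Phi(I)$ where $I'=(G^*,\mathcal{T},p)$; (4) a set $Z\subseteq V(G)$ is a multicut in $(G^*,\mathcal{T})$ if and only if $Z$ is a multicut in $(G,\mathcal{T})$ such that for every $1\le i\le r$ and every $v\in B_i$, either $v\in Z$ or $Z$ is a $\{v\}-\{t_i\}$ separator in $G$; in particular $I'$ is a YES instance iff $I$ admits a solution with this property; (5) $S(G^*,v)\subseteq S(G,v)$ for every $v\in V(G)$, and if $(s_i,v)\in E(G^* )$ for some $i$ then $S(G^*,v)=S(G,v)$.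
   Context: \textsc{DAG Multicut}: input a directed acyclic graph $G$, terminal pairs $\mathcal{T}=\{(s_i,t_i):1\le i\le r\}$, integer $p$; terminals are all $s_i,t_i$. Standing assumptions: all terminals are pairwise distinct, each $s_i$ has no in-neighbours, each $t_i$ has no out-neighbours, and $\mathrm{cut}_G(s_i,t_i)\le p$ for all $i$. $T^s=\{s_1,\dots,s_r\}$; $N^+_G(Y)=(\bigcup_{y\in Y}\{u:(y,u)\in E(G)\})\setminus Y$. A multicut is a set of non-terminal vertices $Z$ with $t_i$ unreachable from $s_i$ in $G\setminus Z$ for all $i$; a solution is a multicut of size $\le p$. For disjoint non-empty $X,Y$, an $X-Y$ separator is a set of non-terminal vertices disjoint from $X\cup Y$ meeting every $X$–$Y$ path; $\mathrm{cut}_G(X,Y)$ is its minimum size ($\infty$ if an arc goes from $X$ to $Y$). A minimal separator $Z$ is important if no other $X-Y$ separator $Z'$ with $|Z'|\le|Z|$ satisfies: every vertex reachable from $X$ in $G\setminus Z$ is reachable from $X$ in $G\setminus Z'$. The unique minimum-size important $X-Y$ separator is the $X-Y$ mincut closest to $Y$; the $X-Y$ mincut closest to $X$ is the $Y-X$ mincut closest to $X$ in the graph with all arcs reversed. $S(G,v)$ is the set of sources $s_i$ from which $v$ is reachable in $G$. The potential is $\Phi((G,\mathcal{T},p))=(r+1)p-\sum_i\mathrm{cut}_G(s_i,t_i)$. Degree-reduced graph $G^*$: let $B_i$ be the $s_i-t_i$ mincut closest to $s_i$ in $G$; $V(G^* )=V(G)$, its arcs are all arcs of $G$ not incident to $T^s$,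 plus, for each $1\le i\le r$, the arcs $(s_i,v)$ for all $v\in B_i$, and the arcs $(s_i,v)$ for all $v\in\bigcup_{i'=1}^r B_{i'}$ with $s_i\in S(G,v)$ such that $v$ is not reachable in $G$ from any vertex of $B_i$. *)

From mathcomp Require Import all_boot all_order all_algebra.
Set Implicit Arguments. Unset Strict Implicit. Unset Printing Implicit Defensive.

Section DagMulticut.
Variable V : finType.

Definition acyclic (E : rel V) : Prop := forall u v, E u v -> ~~ connect E v u.

Definition rev_rel (E : rel V) : rel V := [rel a b | E b a].

Definition avoid_rel (E : rel V) (Z : {set V}) : rel V :=
  [rel a b | [&& E a b, a \notin Z & b \notin Z]].

Definition reach (E : rel V) (Z : {set V}) (x y : V) : bool :=
  [&& x \notin Z, y \notin Z & connect (avoid_rel E Z) x y].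

Definition reach_set (E : rel V) (Z X : {set V}) : {set V} :=
  [set w | [exists x in X, reach E Z x w]].

Definition is_sep (E : rel V) (T X Y Z : {set V}) : bool :=
  [&& [disjoint Z & T], [disjoint Z & X :|: Y] &
      ~~ [exists x in X, exists y in Y, reach E Z x y]].

(* cut_G(X,Y): None encodes infinity (no separator exists) *)
Definition cut (E : rel V) (T X Y : {set V}) : option nat :=
  if [exists Z, is_sep E T X Y Z]
  then Some (\big[minn/#|V|]_(Z : {set V} | is_sep E T X Y Z) #|Z|)
  else None.

Definition minimal_sep (E : rel V) (T X Y Z : {set V}) : bool :=
  is_sep E T X Y Z &&
  [forall Z' : {set V}, (Z' \proper Z) ==> ~~ is_sep E T X Y Z'].

Definition important_sep (E : rel V) (T X Y Z : {set V}) : bool :=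
  minimal_sep E T X Y Z &&
  ~~ [exists Z' : {set V}, [&& Z' != Z, is_sep E T X Y Z', #|Z'| <= #|Z| &
        reach_set E Z X \subset reach_set E Z' X]].

(* the X - Y mincut closest to Y: the minimum-size important X-Y separator *)
Definition mincut_closest_to_target (E : rel V) (T X Y Z : {set V}) : bool :=
  important_sep E T X Y Z && (cut E T X Y == Some #|Z|).

Definition mincut_closest_to_source (E : rel V) (T X Y Z : {set V}) : bool :=
  mincut_closest_to_target (rev_rel E) T Y X Z.

Definition out_nbhd (E : rel V) (Y : {set V}) : {set V} :=
  [set u | [exists y in Y, E y u]] :\: Y.

Variable r : nat.

Definition terminals (s t : 'I_r -> V) : {set V} :=
  [set x | [exists i, (x == s i) || (x == t i)]].

Definition sources (s : 'I_r -> V) : {set V} := [set s i | i : 'I_r].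

Definition S_of (E : rel V) (s : 'I_r -> V) (v : V) : {set V} :=
  [set x | [exists i, (x == s i) && connect E (s i) v]].

Definition multicut (E : rel V) (s t : 'I_r -> V) (Z : {set V}) : bool :=
  [disjoint Z & terminals s t] &&
  [forall i, ~~ reach E Z (s i) (t i)].

Definition standing (E : rel V) (s t : 'I_r -> V) (p : nat) : Prop :=
  [/\ acyclic E, injective s /\ injective t /\ (forall i j, s i != t j),
      (forall i u, ~~ E u (s i)) /\ (forall i u, ~~ E (t i) u) &
      (forall i, exists2 k, cut E (terminals s t) [set s i] [set t i] = Some k & k <= p)].

(* potential; cut values are finite under the standing assumptions *)
Definition Phi (E : rel V) (s t : 'I_r -> V) (p : nat) : int :=
  ((r.+1 * p)%:Z -
   (\sum_(i < r) (odflt 0%N (cut E (terminals s t) [set s i] [set t i]))%:Z))%R.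

Definition degree_reduced (E : rel V) (s : 'I_r -> V) (B : 'I_r -> {set V}) : rel V :=
  [rel u v |
    [|| [&& E u v, u \notin sources s & v \notin sources s],
        [exists i, (u == s i) && (v \in B i)] |
        [exists i, [&& u == s i,
                        v \in \bigcup_(i' < r) B i',
                        s i \in S_of E s v &
                        ~~ [exists b in B i, connect E b v]]]]].

End DagMulticut.

From mathcomp Require Import all_boot all_order all_algebra.
Set Implicit Arguments. Unset Strict Implicit. Unset Printing Implicit Defensive.

(* The arcs of G* leaving
   non-sources are exactly those of G, so walks from non-sources agree in G and
   G*.  The key fact [Es_walk_from_source] says that a walk of G* leaving s_i
   either yields a walk of G from s_i avoiding B_i, or passes through some b in
   B_i and continues in G; conversely every s_i-t_i walk of G crosses B_i and so
   gives one of G*.  With "B_i separates s_i from t_i" this yields the claims: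
   (1) N^+(T^s) lies in the union of the B_i, each of size cut(s_i,t_i) <= p;
   (2)-(3) s_i-t_i separators of G* are separators of G while B_i still
   separates in G*, so B_i keeps all its extremal properties and the cut values
   do not change; (4) and (5) follow from the key fact and its converse. *)

Section Reachability.
Variable V : finType.
Implicit Types (e : rel V) (Z : {set V}) (x y : V).

Lemma reach_ind e Z (P : V -> Prop) y :
  y \notin Z -> P y ->
  (forall x z, x \notin Z -> e x z -> reach e Z z y -> P z -> P x) ->
  forall x, reach e Z x y -> P x.
Proof.
move=> yZ Py step x /and3P [xZ _ /connectP [q pq eyl]].
elim: q x xZ pq eyl => [|z q IH] x xZ /=; first by move=> _ <-.
case/andP => /and3P [exz _ zZ] pq eyl.
apply: (step x z xZ exz); last exact: IH.
by rewrite /reach zZ yZ /=; apply/connectP; exists q.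
Qed.

Lemma reach_notin e Z x y : reach e Z x y -> (x \notin Z) && (y \notin Z).
Proof. by case/and3P => -> ->. Qed.

Lemma reach_refl e Z x : x \notin Z -> reach e Z x x.
Proof. by move=> xZ; rewrite /reach xZ connect0. Qed.

Lemma reach_cons e Z x z y : e x z -> x \notin Z -> reach e Z z y -> reach e Z x y.
Proof.
move=> exz xZ /and3P [zZ yZ c]; rewrite /reach xZ yZ /=.
by apply: connect_trans c; apply: connect1; rewrite /avoid_rel /= exz xZ zZ.
Qed.

Lemma reach_rcons e Z x z y : reach e Z x z -> e z y -> y \notin Z -> reach e Z x y.
Proof.
move=> /and3P [xZ zZ c] ezy yZ; rewrite /reach xZ yZ /=.
by apply: connect_trans c _; apply: connect1; rewrite /avoid_rel /= ezy zZ yZ.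
Qed.

Lemma reach_trans e Z x y w : reach e Z x y -> reach e Z y w -> reach e Z x w.
Proof.
move=> /and3P [xZ yZ c1] /and3P [_ wZ c2]; rewrite /reach xZ wZ /=.
exact: connect_trans c1 c2.
Qed.

Lemma reach_subset e Z Z' x y : Z \subset Z' -> reach e Z' x y -> reach e Z x y.
Proof.
move=> sZ h; have /andP [_ yZ'] := reach_notin h.
have nZ w : w \notin Z' -> w \notin Z by apply: contra; apply: (subsetP sZ).
move: x h; apply: (reach_ind (P := fun x => reach e Z x y) yZ' (reach_refl _ (nZ _ yZ'))).
by move=> x z xZ' exz _; apply: reach_cons exz (nZ _ xZ').
Qed.

Lemma reach0 e x y : reach e set0 x y = connect e x y.
Proof.
rewrite /reach !inE /=; apply: eq_connect => a b.
by rewrite /avoid_rel /= !inE !andbT.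
Qed.

Lemma reach_first e Z x y : reach e Z x y -> x != y ->
  exists w, [/\ e x w, w \notin Z & reach e Z w y].
Proof.
move=> h; have /andP [_ yZ] := reach_notin h.
pose P x := x != y -> exists w, [/\ e x w, w \notin Z & reach e Z w y].
move: x h; apply: (reach_ind (P := P) yZ); first by rewrite /P eqxx.
move=> x z _ exz hz _ _; exists z; split => //.
by have /andP [] := reach_notin hz.
Qed.

Lemma reach_split e Z (A : {set V}) x y : reach e Z x y ->
  reach e (Z :|: A) x y \/ exists2 a, a \in A & reach e Z x a /\ reach e Z a y.
Proof.
move=> h; have /andP [_ yZ] := reach_notin h.
move: x h; apply: reach_ind => //.
  case: (boolP (y \in A)) => yA.
    by right; exists y => //; split; apply: reach_refl.
  by left; apply: reach_refl; rewrite in_setU negb_or yZ.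
move=> x z xZ exz hz [hl | [a aA [h1 h2]]].
  case: (boolP (x \in A)) => xA.
    right; exists x => //; split; first exact: reach_refl.
    exact: reach_cons exz xZ hz.
  by left; apply: reach_cons exz _ hl; rewrite in_setU negb_or xZ.
by right; exists a => //; split => //; apply: reach_cons exz xZ h1.
Qed.

Lemma reach_rev e Z x y : reach (rev_rel e) Z x y = reach e Z y x.
Proof.
have half (f : rel V) a b : reach f Z a b -> reach (rev_rel f) Z b a.
  move=> h; have /andP [aZ bZ] := reach_notin h.
  move: a h aZ; apply: (reach_ind (P := fun a => a \notin Z -> reach (rev_rel f) Z b a) bZ).
    by move=> _; apply: reach_refl.
  move=> a z aZ faz hz IHz _; apply: reach_rcons (IHz _) _ aZ => //.
  by have /andP [] := reach_notin hz.
apply/idP/idP; last exact: half.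
exact: half.
Qed.

Lemma reach_transfer (e e' : rel V) (P : pred V) :
  (forall a b, P a -> e a b -> P b && e' a b) ->
  forall Z x y, P x -> reach e Z x y -> reach e' Z x y.
Proof.
move=> H Z x y Px h; have /andP [_ yZ] := reach_notin h.
move: x h Px; apply: (reach_ind (P := fun x => P x -> reach e' Z x y) yZ).
  by move=> _; apply: reach_refl.
move=> x z xZ exz _ IHz Px; have /andP [Pz e'xz] := H _ _ Px exz.
exact: reach_cons e'xz xZ (IHz Pz).
Qed.

End Reachability.

Section Separators.
Variable V : finType.
Implicit Types (e : rel V) (T Z : {set V}) (x y : V).

Lemma sep1 e T x y Z : is_sep e T [set x] [set y] Z =
  [&& [disjoint Z & T], [disjoint Z & [set x] :|: [set y]] & ~~ reach e Z x y].
Proof.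
rewrite /is_sep; congr [&& _, _ & ~~ _]; apply/idP/idP.
  by case/existsP => x0 /andP [/set1P -> /existsP [y0 /andP [/set1P ->]]].
by move=> h; apply/existsP; exists x; rewrite set11 /=; apply/existsP; exists y; rewrite set11.
Qed.

Lemma sep_rev1 e T x y Z :
  is_sep (rev_rel e) T [set y] [set x] Z = is_sep e T [set x] [set y] Z.
Proof. by rewrite !sep1 reach_rev setUC. Qed.

Lemma cut_eq e1 e2 T X1 Y1 X2 Y2 :
  (forall Z, is_sep e1 T X1 Y1 Z = is_sep e2 T X2 Y2 Z) ->
  cut e1 T X1 Y1 = cut e2 T X2 Y2.
Proof. by move=> h; rewrite /cut (eq_existsb h) (eq_bigl _ _ h). Qed.

Lemma cut_rev1 e T x y : cut (rev_rel e) T [set y] [set x] = cut e T [set x] [set y].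
Proof. by apply: cut_eq => Z; rewrite sep_rev1. Qed.

Lemma bigmin_le (I : finType) (P : pred I) (F : I -> nat) (n : nat) z :
  P z -> \big[minn/n]_(i | P i) F i <= F z.
Proof.
move=> Pz; have : z \in index_enum I by exact: mem_index_enum.
elim: (index_enum I) => [|i ix IH] //; rewrite inE big_cons => /predU1P [<- | zix].
  by rewrite Pz geq_minl.
by case: ifP => _; [rewrite geq_min IH ?orbT | exact: IH].
Qed.

Lemma cut_le e T X Y k Z : cut e T X Y = Some k -> is_sep e T X Y Z -> k <= #|Z|.
Proof. by rewrite /cut; case: ifP => // _ [<-]; apply: bigmin_le. Qed.

Lemma cut_char e T X Y Z0 : is_sep e T X Y Z0 ->
  (forall Z, is_sep e T X Y Z -> #|Z0| <= #|Z|) -> cut e T X Y = Some #|Z0|.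
Proof.
move=> h0 h; rewrite /cut ifT; last by apply/existsP; exists Z0.
congr Some; apply/eqP; rewrite eqn_leq bigmin_le //=.
apply: (big_ind (fun m => #|Z0| <= m)); first exact: max_card.
  by move=> a b ha hb; rewrite leq_min ha hb.
exact: h.
Qed.

Lemma reach_set_rev1 e Z y w : (w \in reach_set (rev_rel e) Z [set y]) = reach e Z w y.
Proof.
rewrite /reach_set inE; apply/existsP/idP => [[y0 /andP [/set1P ->]] | h].
  by rewrite reach_rev.
by exists y; rewrite set11 reach_rev.
Qed.

Definition closest_to_source e T x y (B : {set V}) : Prop :=
  [/\ is_sep e T [set x] [set y] B,
      forall Z, Z \proper B -> ~~ is_sep e T [set x] [set y] Z,
      forall Z, Z != B -> is_sep e T [set x] [set y] Z -> #|Z| <= #|B| ->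
        ~ (forall w, reach e B w y -> reach e Z w y)
    & cut e T [set x] [set y] = Some #|B|].

Lemma closest_to_sourceP e T x y B :
  mincut_closest_to_source e T [set x] [set y] B <-> closest_to_source e T x y B.
Proof.
rewrite /mincut_closest_to_source /mincut_closest_to_target /important_sep /minimal_sep.
split.
  case/andP => /andP [/andP [Hs Hmin] Himp] /eqP Hcut; split.
  - by rewrite -sep_rev1.
  - by move=> Z HZ; rewrite -sep_rev1; exact: (implyP (forallP Hmin Z) HZ).
  - move=> Z Hne Hsep Hle Hinc; apply: (negP Himp); apply/existsP; exists Z.
    rewrite Hne sep_rev1 Hsep Hle /=.
    by apply/subsetP => w; rewrite !reach_set_rev1; exact: Hinc.
  - by rewrite -cut_rev1.
case => Hs Hmin Himp Hcut.
rewrite sep_rev1 Hs cut_rev1 Hcut eqxx andbT /=; apply/andP; split.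
  by apply/forallP => Z; apply/implyP => h; rewrite sep_rev1; exact: Hmin.
apply/existsP => -[Z /and4P [Hne Hsep Hle Hsub]].
apply: (Himp Z Hne _ Hle); first by rewrite -sep_rev1.
by move=> w; rewrite -!reach_set_rev1; exact: (subsetP Hsub w).
Qed.

End Separators.

Lemma card_bigcup_le (V I : finType) (A : I -> {set V}) :
  #|\bigcup_i A i| <= \sum_i #|A i|.
Proof.
apply: (big_ind2 (fun (U : {set V}) (n : nat) => #|U| <= n)) => //.
  by rewrite cards0.
move=> U1 n1 U2 n2 h1 h2; apply: leq_trans (leq_card_setU U1 U2) _.
exact: leq_add.
Qed.


Section DegreeReduction.
Variables (V : finType) (E : rel V) (r : nat) (s t : 'I_r -> V) (p : nat)
  (B : 'I_r -> {set V}).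
Hypothesis standingE : standing E s t p.
Hypothesis closestB : forall i, closest_to_source E (terminals s t) (s i) (t i) (B i).
Local Notation T := (terminals s t).
Local Notation Es := (degree_reduced E s B).
Local Notation src := (sources s).

Lemma s_inj : injective s. Proof. by case: standingE => _ [? _]. Qed.

Lemma no_arc_into_source i u : ~~ E u (s i).
Proof. by case: standingE => _ _ [h _]. Qed.

Lemma s_neq_t i j : s i != t j. Proof. by case: standingE => _ [_ [_ h]]. Qed.

Lemma s_terminal i : s i \in T.
Proof. by rewrite inE; apply/existsP; exists i; rewrite eqxx. Qed.

Lemma t_terminal i : t i \in T.
Proof. by rewrite inE; apply/existsP; exists i; rewrite eqxx orbT. Qed.

Lemma s_source i : s i \in src. Proof. exact: imset_f. Qed.

Lemma E_target_nsrc u v : E u v -> v \notin src.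
Proof.
by move=> h; apply/imsetP => -[i _ ev]; move: h; rewrite ev (negbTE (no_arc_into_source i u)).
Qed.

Lemma B_separates i : ~~ reach E (B i) (s i) (t i).
Proof. by case: (closestB i) => /[!sep1] /and3P []. Qed.

Lemma B_nterminal i b : b \in B i -> b \notin T.
Proof. by case: (closestB i) => /[!sep1] /and3P [d _ _] _ _ _ /(disjointFr d) ->. Qed.

Lemma B_nsrc i b : b \in B i -> b \notin src.
Proof. by move/B_nterminal; apply: contra => /imsetP [j _ ->]; exact: s_terminal. Qed.

(* Every vertex of B_i is reachable from s_i: otherwise B_i minus it would
   still separate, contradicting inclusion-minimality. *)
Lemma B_reachable i b : b \in B i -> connect E (s i) b.
Proof.
move=> bB; case: (closestB i) => Hs Hmin _ _.
have := Hmin _ (properD1 bB); move: Hs; rewrite !sep1 => /and3P [d1 d2 _].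
rewrite (disjointWl (subD1set _ _) d1) (disjointWl (subD1set _ _) d2) /= negbK => h.
case: (reach_split [set b] h) => [h1 | [b' /set1P -> [h1 _]]].
  by move: h1; rewrite setUC setD1K // (negbTE (B_separates i)).
by rewrite -reach0; apply: reach_subset (sub0set _) h1.
Qed.

Lemma cut_B i : cut E T [set s i] [set t i] = Some #|B i|.
Proof. by case: (closestB i). Qed.

Lemma card_B_le i : #|B i| <= p.
Proof. by case: standingE => _ _ _ /(_ i) [k]; rewrite cut_B => -[->]. Qed.

Lemma Es_target_nsrc u v : Es u v -> v \notin src.
Proof.
rewrite /degree_reduced /= => /or3P [/and3P [] // | /existsP [i /andP [_ vB]] |
  /existsP [i /and4P [_ /bigcupP [j _ vB] _ _]]]; exact: B_nsrc vB.
Qed.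

Lemma Es_nsrc u v : u \notin src -> Es u v = E u v.
Proof.
move=> hu; rewrite /degree_reduced /=; apply/idP/idP; last first.
  by move=> h; rewrite h hu (E_target_nsrc h).
by case/or3P => [/and3P [] // | /existsP [i /andP [/eqP eu _]] |
  /existsP [i /and4P [/eqP eu _ _ _]]]; rewrite eu s_source in hu.
Qed.

Lemma Es_source_arc i v : Es (s i) v -> v \in B i \/
  [/\ v \in \bigcup_(j < r) B j, connect E (s i) v & ~~ [exists b in B i, connect E b v]].
Proof.
rewrite /degree_reduced /= => /or3P [/and3P [_ h _] | /existsP [j /andP [/eqP eu vB]] |
  /existsP [j /and4P [/eqP eu vU Sv nb]]].
- by rewrite s_source in h.
- by left; rewrite (s_inj eu).
- right; rewrite (s_inj eu) in Sv nb *; split => //.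
  by move: Sv; rewrite inE => /existsP [k /andP [/eqP /s_inj <-]].
Qed.

Lemma Es_source_B i v : v \in B i -> Es (s i) v.
Proof.
by move=> vB; rewrite /degree_reduced /=; apply/or3P/Or32/existsP; exists i; rewrite eqxx.
Qed.

Lemma Es_source_far i v : v \in \bigcup_(j < r) B j -> connect E (s i) v ->
  ~~ [exists b in B i, connect E b v] -> Es (s i) v.
Proof.
move=> vU c nb; rewrite /degree_reduced /=; apply/or3P/Or33/existsP; exists i.
by rewrite eqxx vU nb andbT inE; apply/existsP; exists i; rewrite eqxx.
Qed.

(* Walks starting outside the sources never reach a source, so they are the
   same in G and G*. *)
Lemma reach_Es_nsrc Z x y : x \notin src -> reach Es Z x y = reach E Z x y.
Proof.
move=> xs; apply/idP/idP; apply: (reach_transfer (P := [pred a | a \notin src])) => //= a b ha.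
  by move=> h; rewrite (Es_target_nsrc h) -(Es_nsrc _ ha).
by move=> h; rewrite (E_target_nsrc h) (Es_nsrc _ ha).
Qed.

(* For a far arc (s_i, w),
   a G-walk from s_i to w avoids B_i since no vertex of B_i reaches w. *)
Lemma Es_walk_from_source i Z y : reach Es Z (s i) y -> s i != y ->
  reach E (B i) (s i) y \/ exists2 b, b \in B i & reach E Z b y.
Proof.
move=> h ne; have [w [esw _ hw]] := reach_first h ne.
rewrite reach_Es_nsrc ?(Es_target_nsrc esw) // in hw.
case: (Es_source_arc esw) => [wB | [_ cw nb]]; first by right; exists w.
have sw : reach E (B i) (s i) w.
  move: cw; rewrite -reach0 => /(reach_split (B i)) [| [b bB [_ hb]]].
    by rewrite set0U.
  by case/negP: nb; apply/existsP; exists b; rewrite bB -reach0.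
case: (reach_split (B i) hw) => [hw' | [b bB [_ hb]]]; last by right; exists b.
by left; apply: reach_trans sw (reach_subset (subsetUr _ _) hw').
Qed.

(* Conversely, an s_i-t_i walk of G passes through B_i, and its part after
   B_i is a walk of G* starting with the arc (s_i, b). *)
Lemma reach_E_Es Z i : reach E Z (s i) (t i) -> reach Es Z (s i) (t i).
Proof.
move=> h; case: (reach_split (B i) h) => [h1 | [b bB [h1 h2]]].
  by have := reach_subset (subsetUr Z (B i)) h1; rewrite (negbTE (B_separates i)).
have /andP [sZ _] := reach_notin h1.
by apply: reach_cons (Es_source_B bB) sZ _; rewrite reach_Es_nsrc ?(B_nsrc bB).
Qed.

(* Claim (1): the out-neighbours of the sources in G* all lie in the B_i. *)
Lemma out_nbhd_sources_le : #|out_nbhd Es src| <= r * p.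
Proof.
have sub : out_nbhd Es src \subset \bigcup_(i < r) B i.
  apply/subsetP => u; rewrite /out_nbhd inE => /andP [_].
  rewrite inE => /existsP [y /andP [/imsetP [i _ ->] h]].
  by case: (Es_source_arc h) => [uB | [hu _ _] //]; apply/bigcupP; exists i.
apply: leq_trans (subset_leq_card sub) (leq_trans (card_bigcup_le B) _).
rewrite -[r in r * p]card_ord -sum_nat_const.
by apply: leq_sum => i _; exact: card_B_le.
Qed.

Lemma sep_Es_E Z i : is_sep Es T [set s i] [set t i] Z -> is_sep E T [set s i] [set t i] Z.
Proof.
by rewrite !sep1 => /and3P [-> -> h] /=; apply: contra h; exact: reach_E_Es.
Qed.

Lemma B_separates_Es i : is_sep Es T [set s i] [set t i] (B i).
Proof.
case: (closestB i) => Hs _ _ _; move: Hs; rewrite !sep1 => /and3P [-> -> _] /=.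
apply/negP => /Es_walk_from_source /(_ (s_neq_t i i)) [| [b bB hb]].
  by apply/negP; exact: B_separates.
by have /andP [] := reach_notin hb; rewrite bB.
Qed.

Lemma cut_Es i : cut Es T [set s i] [set t i] = Some #|B i|.
Proof.
apply: cut_char (B_separates_Es i) _ => Z h.
exact: cut_le (cut_B i) (sep_Es_E h).
Qed.

(* Claim (2): the separators of G* are among those of G, and walks to t_i from
   non-sources are the same in G and G*; a walk from a source s_j is handled
   through its first arc, which ends at a non-source.  Hence every extremal
   property of B_i transfers from G to G*. *)
Lemma closest_to_source_Es i : closest_to_source Es T (s i) (t i) (B i).
Proof.
case: (closestB i) => _ Hmin Himp _; split.
- exact: B_separates_Es.
- by move=> Z pr; apply: contra (Hmin Z pr); exact: sep_Es_E.
- move=> Z Hne Hsep Hle Hinc; apply: (Himp Z Hne (sep_Es_E Hsep) Hle) => w hw.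
  have dZ : [disjoint Z & T] by move: Hsep; rewrite sep1 => /and3P [].
  case: (boolP (w \in src)) hw => [/imsetP [j _ ->] hw | ws hw]; last first.
    by rewrite -reach_Es_nsrc //; apply: Hinc; rewrite reach_Es_nsrc.
  have [y [ey _ hy]] := reach_first hw (s_neq_t j i).
  have ys := E_target_nsrc ey.
  apply: reach_cons ey (negbT (disjointFl dZ (s_terminal j))) _.
  by rewrite -reach_Es_nsrc //; apply: Hinc; rewrite reach_Es_nsrc.
- exact: cut_Es.
Qed.

Lemma Phi_Es : Phi Es s t p = Phi E s t p.
Proof. by rewrite /Phi; under eq_bigr => i _ do rewrite cut_Es -(cut_B i). Qed.

Definition guards (Z : {set V}) : Prop :=
  forall i v, v \in B i -> v \in Z \/ is_sep E T [set v] [set t i] Z.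

Lemma guards_no_reach Z i b : guards Z -> b \in B i -> ~~ reach E Z b (t i).
Proof.
move=> gZ bB; apply/negP => h; have /andP [bZ _] := reach_notin h.
by case: (gZ i b bB) => [/(negP bZ) | /[!sep1] /and3P [_ _ /negP]].
Qed.

Lemma multicut_Es Z : multicut Es s t Z <-> multicut E s t Z /\ guards Z.
Proof.
split.
  case/andP => dZ /forallP hZ; split.
    rewrite /multicut dZ /=; apply/forallP => i; apply/negP => h.
    by have := hZ i; rewrite (reach_E_Es h).
  move=> i v vB; case: (boolP (v \in Z)) => vZ; [by left | right].
  have dvt : [disjoint Z & [set v; t i]].
    rewrite disjoint_sym disjoint_subset; apply/subsetP => x /set2P [] -> /[!inE] //.
    by rewrite (disjointFl dZ (t_terminal i)).
  rewrite sep1 dZ dvt /=; apply/negP => h.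
  move/negP: (hZ i); apply; apply: reach_cons (Es_source_B vB) _ _.
    exact: negbT (disjointFl dZ (s_terminal i)).
  by rewrite reach_Es_nsrc ?(B_nsrc vB).
case => /andP [dZ _] gZ; apply/andP; split => //; apply/forallP => i; apply/negP.
move/Es_walk_from_source => /(_ (s_neq_t i i)) [h | [b bB hb]].
  by move/negP: (B_separates i).
by move/negP: (guards_no_reach gZ bB).
Qed.

Lemma solution_Es : (exists2 Z, multicut Es s t Z & #|Z| <= p) <->
  (exists2 Z, multicut E s t Z /\ #|Z| <= p & guards Z).
Proof.
split=> [[Z /multicut_Es [mZ gZ] cZ] | [Z [mZ cZ] gZ]]; exists Z => //.
exact/multicut_Es.
Qed.

(* Claim (5): a walk of G* from s_j is a walk of G from s_j, and an arc
   (s_i, v) of G* lets every source reaching v in G reach v in G*. *)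
Lemma S_of_Es_sub v : S_of Es s v \subset S_of E s v.
Proof.
apply/subsetP => x; rewrite !inE => /existsP [j /andP [/eqP -> c]].
apply/existsP; exists j; rewrite eqxx /=.
case: (eqVneq (s j) v) => [<- | ne]; first exact: connect0.
rewrite -reach0 in c; case: (Es_walk_from_source c ne) => [h | [b bB hb]].
  by rewrite -reach0; apply: reach_subset (sub0set _) h.
by apply: connect_trans (B_reachable bB) _; rewrite -reach0.
Qed.

Lemma S_of_Es_eq i v : Es (s i) v -> S_of Es s v = S_of E s v.
Proof.
move=> h; apply/eqP; rewrite eqEsubset S_of_Es_sub /=.
apply/subsetP => x; rewrite !inE => /existsP [j /andP [/eqP -> c]].
apply/existsP; exists j; rewrite eqxx /=.
have vU : v \in \bigcup_(j < r) B j.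
  by case: (Es_source_arc h) => [vB | [vU _ _] //]; apply/bigcupP; exists i.
case: (boolP [exists b in B j, connect E b v]) => [/existsP [b /andP [bB cb]] | nb].
  apply: connect_trans (connect1 (Es_source_B bB)) _.
  by rewrite -reach0 reach_Es_nsrc ?(B_nsrc bB) // reach0.
exact/connect1/Es_source_far.
Qed.

End DegreeReduction.

Theorem mainTheorem11 (V : finType) (E : rel V) (r : nat)
    (s t : 'I_r -> V) (p : nat) (B : 'I_r -> {set V}) :
  standing E s t p ->
  (forall i, mincut_closest_to_source E (terminals s t) [set s i] [set t i] (B i)) ->
  let Es := degree_reduced E s B in
  [/\ (* (1) *)
      #|out_nbhd Es (sources s)| <= r * p,
      (* (2) *)
      (forall i, mincut_closest_to_source Es (terminals s t) [set s i] [set t i] (B i)),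
      (* (3) *)
      Phi Es s t p = Phi E s t p,
      (* (4) *)
      (forall Z : {set V},
         multicut Es s t Z <->
         (multicut E s t Z /\
          forall i, forall v, v \in B i ->
            v \in Z \/ is_sep E (terminals s t) [set v] [set t i] Z))
      /\
      ((exists2 Z : {set V}, multicut Es s t Z & #|Z| <= p) <->
       (exists2 Z : {set V}, multicut E s t Z /\ #|Z| <= p &
          forall i, forall v, v \in B i ->
            v \in Z \/ is_sep E (terminals s t) [set v] [set t i] Z) ) &
      (* (5) *)
      (forall v, S_of Es s v \subset S_of E s v) /\
      (forall i v, Es (s i) v -> S_of Es s v = S_of E s v)].
Proof.
move=> standingE closestB0 Es.
have closestB i : closest_to_source E (terminals s t) (s i) (t i) (B i).
  exact/closest_to_sourceP.
split.
- exact: out_nbhd_sources_le standingE closestB.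
- by move=> i; apply/closest_to_sourceP; exact: closest_to_source_Es standingE closestB i.
- exact: Phi_Es standingE closestB.
- by split; [exact: multicut_Es standingE closestB | exact: solution_Es standingE closestB].
- by split; [exact: S_of_Es_sub standingE closestB | exact: S_of_Es_eq standingE closestB].
Qed.
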